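(* Let $\alpha=(\alpha_1,\dots,\alpha_t)$ be palindromic (i.e. $\alpha_i=\alpha_{t+1-i}$ for all $i$) with $t$ odd, let $F=\breve F(\alpha)$ with elements $x_1,\dots,x_n$ and shared elements $s_1,\dots,s_{t-1}$. Assume that $\hat\chi_{s_i}+\hat\chi_{s_{t-i}}$ is $1$-mesic under rowmotion for all $i\in[t-1]$. Then (1) $\hat\chi_{x_k}+\hat\chi_{x_{n-k+1}}$ is $1$-mesic for all $k\in[n]$, and (2) $\chi_{x_k}-\chi_{x_{n-k+1}}$ is $0$-mesic for all $k\in[n]$.
   Context: A fence $\breve F(\alpha_1,\dots,\alpha_t)$ ($t\ge2$, positive integers, $\alpha_1,\alpha_t\ge2$) is the poset on $\{x_1,\dots,x_n\}$, $n=\alpha_1+\dots+\alpha_t-1$, with $a_i=\alpha_1+\dots+\alpha_i$, $a_0=0$, whose cover relations are: for $1\le j\le n-1$ with $a_{i-1}\le j<a_i$, $x_j\lessdot x_{j+1}$ if $i$ odd and $x_j\gtrdot x_{j+1}$ if $i$ even. Shared elements: $s_i=x_{a_i}$. $\mathcal J(F)$ is the set of order ideals; rowmotion $\rho$ sends $I$ to the order ideal generated by $\min(F\setminus I)$. $\hat\chi_q(I)=1$ if $q\in I$, else 0; $\chi_q(I)=1$ if $q\in\max(I)$, else 0. A statistic $f:\mathcal J(F)\to\mathbb R$ is $c$-mesic under rowmotion if its average over every $\rho$-orbit equals $c$. *)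

From mathcomp Require Import all_boot all_order all_algebra.
Unset Printing Implicit Defensive.
Import GRing.Theory Num.Theory.
Local Open Scope ring_scope.

(* Fence F(alpha_1,...,alpha_t), alpha : seq nat with size alpha = t.
   Elements x_1..x_n are represented by 'I_n, x_j <-> ordinal j-1. *)

Definition psum (alpha : seq nat) (i : nat) : nat := (\sum_(k < i) nth 0 alpha k)%N.

Definition fsize (alpha : seq nat) : nat := (\sum_(a <- alpha) a).-1.

(* for 1 <= j <= n-1: the index i with a_{i-1} <= j < a_i satisfies
   i - 1 = #{ i' in [1,t] | a_{i'} <= j }; up j <=> i odd <=> x_j covered by x_{j+1} *)
Definition up (alpha : seq nat) (j : nat) : bool :=
  ~~ odd (count (fun i => psum alpha i <= j)%N (iota 1 (size alpha))).

(* cover relation: cov u v <=> u is covered by v *)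
Definition cov (alpha : seq nat) : rel 'I_(fsize alpha) :=
  fun u v => ((v == u.+1 :> nat) && up alpha u.+1)
          || ((u == v.+1 :> nat) && ~~ up alpha v.+1).

Definition fle (alpha : seq nat) : rel 'I_(fsize alpha) := connect (cov alpha).
Definition flt (alpha : seq nat) (u v : 'I_(fsize alpha)) : bool :=
  (u != v) && fle alpha u v.

Definition is_ideal (alpha : seq nat) (I : {set 'I_(fsize alpha)}) : bool :=
  [forall x, forall y, ((y \in I) && fle alpha x y) ==> (x \in I)].

Definition min_compl (alpha : seq nat) (I : {set 'I_(fsize alpha)}) :=
  [set m | (m \notin I) && [forall y, (y \notin I) ==> ~~ flt alpha y m]].

Definition rowmotion (alpha : seq nat) (I : {set 'I_(fsize alpha)})
  : {set 'I_(fsize alpha)} :=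
  [set x | [exists m in min_compl alpha I, fle alpha x m]].

Definition maxel (alpha : seq nat) (I : {set 'I_(fsize alpha)}) :=
  [set m in I | [forall y in I, ~~ flt alpha m y]].

(* hatchi_{x_q}(I), chi_{x_q}(I), with q a 1-based position *)
Definition hatchi (alpha : seq nat) (q : nat) (I : {set 'I_(fsize alpha)}) : rat :=
  ([exists x in I, x.+1 == q] : nat)%:R.
Definition chi (alpha : seq nat) (q : nat) (I : {set 'I_(fsize alpha)}) : rat :=
  ([exists x in maxel alpha I, x.+1 == q] : nat)%:R.

Definition rorbit (alpha : seq nat) (I : {set 'I_(fsize alpha)}) :=
  [set J | fconnect (rowmotion alpha) I J].

Definition mesic (alpha : seq nat) (f : {set 'I_(fsize alpha)} -> rat) (c : rat) : Prop :=
  forall I : {set 'I_(fsize alpha)}, is_ideal alpha I ->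
    (\sum_(J in rorbit alpha I) f J) / (#|rorbit alpha I|%:R) = c.

Definition palindromic (alpha : seq nat) : Prop :=
  forall i, (i < size alpha)%N -> nth 0 alpha i = nth 0 alpha (size alpha - 1 - i).

Definition fence_params (alpha : seq nat) : Prop :=
  [/\ (2 <= size alpha)%N, all (fun a => 0 < a)%N alpha,
      (2 <= head 0 alpha)%N & (2 <= last 0 alpha)%N].

From mathcomp Require Import all_boot all_order all_algebra.
From mathcomp Require Import zify lra.
Import GRing.Theory Num.Theory.
Set Implicit Arguments. Unset Strict Implicit. Unset Printing Implicit Defensive.

(* Sum over a rowmotion orbit O and write J' := rho J, so that
   min(F \ J) = max J'.  If x has a single upper cover w, then x lies in J'
   iff x is in min(F \ J) or w lies in J' (never both); if x has a single lower
   cover w, then x is in min(F \ J) iff w lies in J and x does not.  Since rho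
   permutes O, the orbit totals S(k) of \hat\chi_{x_k} are affine along every
   monotone stretch of the fence, once x_0 is adjoined as a bottom
   (S(0) = |O|) and x_{n+1} as a top (S(n+1) = 0).  For alpha palindromic of
   odd length the up/down pattern is symmetric under x_k <-> x_{n+1-k}, so
   S(k) + S(n+1-k) is affine between consecutive shared elements; it equals
   |O| at them (hypothesis) and at both ends, hence everywhere: this is (1).
   The orbit total of \chi_{x_k} is that of [x_k in min(F \ J)], which the same
   rules express through S near k according as x_k is a peak, a valley or on a
   slope; the symmetry swaps peaks with valleys, and (1) makes the totals at
   x_k and x_{n+1-k} agree: this is (2). *)

Lemma connect_first (T : finType) (e : rel T) x y :
  connect e x y -> x = y \/ exists2 z, e x z & connect e z y.
Proof.
move/connectP=> [[|z p]] /= => [_ ->|/andP[exz pz] ->]; first by left.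
by right; exists z => //; apply/connectP; exists p.
Qed.

Lemma connect_last (T : finType) (e : rel T) x y :
  connect e x y -> x = y \/ exists2 z, connect e x z & e z y.
Proof.
move/connectP=> [p]; elim/last_ind: p => [_ ->|p z _]; first by left.
rewrite rcons_path last_rcons => /andP[px ez] ->; right; exists (last x p) => //.
by apply/connectP; exists p.
Qed.

Section FenceOrder.
Variable alpha : seq nat.
Local Notation n := (fsize alpha).
Local Notation T := 'I_(fsize alpha).
Local Notation cov := (cov alpha).
Local Notation fle := (fle alpha).
Local Notation up := (up alpha).
Implicit Types (u v x y : T).

Lemma cov_upperE x y :
  cov x y = ((val y == x.+1) && up x.+1) || ((x == (val y).+1 :> nat) && ~~ up x).
Proof. by rewrite /cov; case: (eqVneq (x : nat) (val y).+1) => [->|]. Qed.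

Lemma cov_lowerE x y :
  cov y x = ((x == (val y).+1 :> nat) && up x) || ((val y == x.+1) && ~~ up x.+1).
Proof. by rewrite /cov; case: (eqVneq (x : nat) (val y).+1) => [->|]. Qed.

Lemma cov_neq x y : cov x y -> x != y.
Proof. by move=> /orP[]/andP[/eqP e _]; apply/eqP => xy; move: e; rewrite xy; lia. Qed.

Lemma path_up p u : path cov u p -> forall k, (u <= k < last u p)%N -> up k.+1.
Proof.
elim: p u => [|z p IH] u /=; first by move=> _ k; lia.
move=> /andP[/orP[/andP[/eqP zu uu]|/andP[/eqP uz _]] pz] k hk.
  have [-> //|nk] := eqVneq k u.
  by apply: (IH z pz); move: hk; rewrite zu; move/eqP: nk; lia.
by apply: (IH z pz); move: hk; rewrite uz; lia.
Qed.

Lemma path_down p u : path cov u p -> forall k, (last u p <= k < u)%N -> ~~ up k.+1.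
Proof.
elim: p u => [|z p IH] u /=; first by move=> _ k; lia.
move=> /andP[/orP[/andP[/eqP zu _]|/andP[/eqP uz dz]] pz] k hk.
  by apply: (IH z pz); move: hk; rewrite zu; lia.
have [-> //|nk] := eqVneq k z.
by apply: (IH z pz); move: hk; rewrite uz; move/eqP: nk; lia.
Qed.

Lemma fle_up u v k : fle u v -> (u <= k < v)%N -> up k.+1.
Proof. by move/connectP=> [p pp ->]; apply: path_up. Qed.

Lemma fle_down u v k : fle u v -> (v <= k < u)%N -> ~~ up k.+1.
Proof. by move/connectP=> [p pp ->]; apply: path_down. Qed.

Lemma fle_refl u : fle u u.
Proof. exact: connect0. Qed.

Lemma fle_trans u v w : fle u v -> fle v w -> fle u w.
Proof. exact: connect_trans. Qed.

Lemma cov_fle u v : cov u v -> fle u v.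
Proof. exact: connect1. Qed.

Lemma fle_anti u v : fle u v -> fle v u -> u = v.
Proof.
move=> uv vu; have [lt|gt|/val_inj//] := ltngtP u v.
  have uk : (u <= u < v)%N by rewrite leqnn lt.
  by have := fle_down vu uk; rewrite (fle_up uv uk).
have vk : (v <= v < u)%N by rewrite leqnn gt.
by have := fle_down uv vk; rewrite (fle_up vu vk).
Qed.

Lemma ord_of_position k : (0 < k <= n)%N -> exists x : T, k = x.+1.
Proof.
move=> hk; have kn : (k.-1 < n)%N by lia.
by exists (Ordinal kn); rewrite /=; lia.
Qed.

End FenceOrder.

Section Rowmotion.
Variable alpha : seq nat.
Local Notation T := 'I_(fsize alpha).
Local Notation fle := (fle alpha).
Local Notation rho := (rowmotion alpha).
Local Notation M := (min_compl alpha).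
Implicit Types (x y m : T) (I J : {set T}).

Lemma min_complP J m :
  reflect (m \notin J /\ forall y, y \notin J -> fle y m -> y = m) (m \in M J).
Proof.
rewrite inE; apply: (iffP andP) => [[mJ /forallP minm]|[mJ minm]]; split=> //.
  by move=> y yJ ym; have := minm y; rewrite yJ /flt ym andbT negbK => /eqP.
apply/forallP => y; apply/implyP => yJ; rewrite /flt negb_and negbK.
by case: (boolP (fle y m)) => [/(minm y yJ) ->|]; rewrite ?eqxx ?orbT.
Qed.

Lemma in_rowmotionP J x : reflect (exists2 m, m \in M J & fle x m) (x \in rho J).
Proof.
rewrite inE; apply: (iffP existsP) => [[m /andP[]]|[m mM xm]]; first by exists m.
by exists m; rewrite mM.
Qed.

Lemma min_compl_sub_rowmotion J : {subset M J <= rho J}.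
Proof. by move=> m mM; apply/in_rowmotionP; exists m => //; apply: fle_refl. Qed.

Lemma ideal_down J : is_ideal alpha J -> forall x y, y \in J -> fle x y -> x \in J.
Proof. by move=> /forallP iJ x y yJ xy; have /forallP/(_ y) := iJ x; rewrite yJ xy. Qed.

Lemma rowmotion_ideal J : is_ideal alpha (rho J).
Proof.
apply/forallP => x; apply/forallP => y; apply/implyP => /andP[/in_rowmotionP[m mM ym] xy].
by apply/in_rowmotionP; exists m => //; apply: fle_trans xy ym.
Qed.

Lemma maxel_rowmotion J : maxel alpha (rho J) = M J.
Proof.
apply/setP => x; rewrite inE; apply/andP/idP => [[/in_rowmotionP[m mM xm] /forallP xmax]|xM].
  have [-> //|nxm] := eqVneq x m.
  by have := xmax m; rewrite min_compl_sub_rowmotion //= /flt nxm xm.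
split; first exact: min_compl_sub_rowmotion.
apply/forallP => y; apply/implyP => /in_rowmotionP[m mM ym]; apply/negP => /andP[nxy xy].
case/min_complP: mM => _ minm; case/min_complP: (xM) => xJ _.
have xm : x = m := minm x xJ (fle_trans xy ym).
by move/eqP: nxy; apply; apply: fle_anti xy _; rewrite xm.
Qed.

Lemma min_compl_below J x : x \notin J -> exists2 m, m \in M J & fle m x.
Proof.
move=> xJ; have Px : [pred z | (z \notin J) && fle z x] x by rewrite /= xJ fle_refl.
case: (@arg_minnP _ x _ (fun z => #|[set y | fle y z]|) Px) => m /andP[mJ mx] minm.
exists m => //; apply/min_complP; split=> // y yJ ym.
apply/eqP/negPn/negP => nym.
have : #|[set z | fle z y]| < #|[set z | fle z m]|.
  apply/proper_card/properP; split.
    by apply/subsetP => z; rewrite !inE => zy; apply: fle_trans zy ym.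
  exists m; rewrite !inE ?fle_refl //; apply/negP => my.
  by move/eqP: nym; apply; apply: fle_anti.
by rewrite ltnNge minm //= yJ (fle_trans ym mx).
Qed.

Lemma rowmotion_inj_ideal J1 J2 :
  is_ideal alpha J1 -> is_ideal alpha J2 -> rho J1 = rho J2 -> J1 = J2.
Proof.
have sub A B : is_ideal alpha A -> rho A = rho B -> A \subset B.
  move=> iA eAB; apply/subsetP => x xA; apply/negPn/negP => xB.
  have [m mM mx] := min_compl_below xB.
  have : m \in M A by rewrite -maxel_rowmotion eAB maxel_rowmotion.
  by case/min_complP; rewrite (ideal_down iA xA mx).
by move=> i1 i2 e; apply/eqP; rewrite eqEsubset !sub.
Qed.

(* A permutation of all subsets whose orbits through ideals are the rowmotion
   orbits. *)
Definition rowmotion_ext J := if is_ideal alpha J then rho J else J.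

Lemma rowmotion_ext_inj : injective rowmotion_ext.
Proof.
move=> J1 J2; rewrite /rowmotion_ext.
case: (boolP (is_ideal alpha J1)) => i1; case: (boolP (is_ideal alpha J2)) => i2.
- exact: rowmotion_inj_ideal.
- by move=> e; move: i2; rewrite -e rowmotion_ideal.
- by move=> e; move: i1; rewrite e rowmotion_ideal.
- by [].
Qed.

Lemma iter_rowmotion_ideal I k : is_ideal alpha I -> is_ideal alpha (iter k rho I).
Proof. by case: k => [//|k] _; apply: rowmotion_ideal. Qed.

Lemma iter_rowmotion_ext I k : is_ideal alpha I -> iter k rowmotion_ext I = iter k rho I.
Proof.
move=> iI; elim: k => [//|k IH] /=.
by rewrite IH /rowmotion_ext iter_rowmotion_ideal.
Qed.

Lemma rorbit_ext I J : is_ideal alpha I ->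
  (J \in rorbit alpha I) = fconnect rowmotion_ext I J.
Proof.
move=> iI; rewrite inE; apply/idP/idP => IJ; rewrite -(iter_findex IJ).
  by rewrite -iter_rowmotion_ext // fconnect_iter.
by rewrite iter_rowmotion_ext // fconnect_iter.
Qed.

Lemma rorbit_ideal I J : is_ideal alpha I -> J \in rorbit alpha I -> is_ideal alpha J.
Proof. by rewrite inE => iI IJ; rewrite -(iter_findex IJ) iter_rowmotion_ideal. Qed.

Local Open Scope ring_scope.

Lemma sum_rorbit_rowmotion (R : nmodType) (F : {set T} -> R) I : is_ideal alpha I ->
  \sum_(J in rorbit alpha I) F (rho J) = \sum_(J in rorbit alpha I) F J.
Proof.
move=> iI; rewrite [RHS](reindex_inj rowmotion_ext_inj) /=.
apply: eq_big => [J|J IJ]; last by rewrite /rowmotion_ext (rorbit_ideal iI IJ).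
by rewrite !rorbit_ext // -same_fconnect1_r //; apply: rowmotion_ext_inj.
Qed.

Lemma mesicP (f : {set T} -> rat) c : mesic alpha f c <->
  (forall I, is_ideal alpha I ->
     \sum_(J in rorbit alpha I) f J = c * #|rorbit alpha I|%:R).
Proof.
have nz I : #|rorbit alpha I|%:R != 0 :> rat.
  by rewrite pnatr_eq0 -lt0n; apply/card_gt0P; exists I; rewrite inE connect0.
split=> h I iI; first by rewrite -(h I iI) divfK.
by rewrite (h I iI) mulfK.
Qed.

End Rowmotion.

Section LocalRules.
Variable alpha : seq nat.
Local Notation n := (fsize alpha).
Local Notation T := 'I_(fsize alpha).
Local Notation cov := (cov alpha).
Local Notation rho := (rowmotion alpha).
Local Notation M := (min_compl alpha).
Implicit Types (x y : T) (J : {set T}).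
Local Open Scope ring_scope.

Lemma hatchi_ord J x : hatchi alpha x.+1 J = (x \in J)%:R.
Proof.
rewrite /hatchi; have -> // : [exists y in J, y.+1 == x.+1] = (x \in J).
apply/existsP/idP => [[y /andP[yJ]]|xJ]; last by exists x; rewrite xJ eqxx.
by rewrite eqSS => /eqP/val_inj <-.
Qed.

Lemma chi_ord J x : chi alpha x.+1 J = (x \in maxel alpha J)%:R.
Proof. exact: hatchi_ord. Qed.

Lemma hatchi_above J p : (n < p)%N -> hatchi alpha p J = 0.
Proof.
move=> np; rewrite /hatchi; have -> // : [exists y in J, y.+1 == p] = false.
by apply/existsP => -[y /andP[_ /eqP yp]]; have := ltn_ord y; lia.
Qed.

Lemma hatchi_rowmotion_upper J x w : (forall y, cov x y = (val y == w)) ->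
  hatchi alpha x.+1 (rho J) = (x \in M J)%:R + hatchi alpha w.+1 (rho J).
Proof.
move=> upper; rewrite hatchi_ord /hatchi.
have [xM|xM] := boolP (x \in M J).
  rewrite min_compl_sub_rowmotion //.
  suff -> : [exists y in rho J, y.+1 == w.+1] = false by rewrite addr0.
  apply/existsP => -[y /andP[/in_rowmotionP[m mM ym]]]; rewrite eqSS -upper => xy.
  case/min_complP: mM => _ minm; case/min_complP: xM => xJ _.
  have xm : x = m := minm x xJ (fle_trans (cov_fle xy) ym).
  by move/eqP: (cov_neq xy); apply; apply: fle_anti (cov_fle xy) _; rewrite xm.
rewrite add0r; have -> // : (x \in rho J) = [exists y in rho J, y.+1 == w.+1].
apply/in_rowmotionP/existsP => [[m mM xm]|[y /andP[/in_rowmotionP[m mM ym]]]].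
  case: (connect_first xm) => [exm|[y xy ym]]; first by rewrite exm mM in xM.
  by exists y; rewrite eqSS -upper xy andbT; apply/in_rowmotionP; exists m.
rewrite eqSS -upper => xy; exists m => //.
exact: fle_trans (cov_fle xy) ym.
Qed.

Lemma min_compl_lower J x w : is_ideal alpha J -> (forall y, cov y x = (y == w)) ->
  (x \in M J)%:R = hatchi alpha w.+1 J - hatchi alpha x.+1 J.
Proof.
move=> iJ lower; have wx : cov w x by rewrite lower.
rewrite !hatchi_ord; have [xJ|xJ] := boolP (x \in J).
  have /negbTE-> : x \notin M J by apply/negP => /min_complP[]; rewrite xJ.
  by rewrite (ideal_down iJ xJ (cov_fle wx)) subrr.
rewrite subr0; have -> // : (x \in M J) = (w \in J).
apply/min_complP/idP => [[_ minx]|wJ].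
  apply/negPn/negP => wJ.
  by have := cov_neq wx; rewrite (minx w wJ (cov_fle wx)) eqxx.
split=> // y yJ yx; case: (connect_last yx) => [//|[z yz zx]].
have zw : z = w by apply/eqP; rewrite -lower.
have : y \in J by apply: (ideal_down iJ wJ); rewrite -zw.
by rewrite (negbTE yJ).
Qed.

Lemma min_compl_minimal J x : (forall y, ~~ cov y x) ->
  (x \in M J)%:R = 1 - hatchi alpha x.+1 J.
Proof.
move=> minimal; rewrite hatchi_ord.
have -> : (x \in M J) = (x \notin J).
  apply/min_complP/idP => [[] //|xJ]; split=> // y _ yx.
  by case: (connect_last yx) => [//|[z _ zx]]; rewrite (negbTE (minimal z)) in zx.
by case: (x \in J); rewrite ?subrr ?subr0.
Qed.

Lemma chi_rowmotion J x : chi alpha x.+1 (rho J) = (x \in M J)%:R.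
Proof. by rewrite chi_ord maxel_rowmotion. Qed.

Lemma chi_maximal J x : (forall y, ~~ cov x y) -> chi alpha x.+1 J = hatchi alpha x.+1 J.
Proof.
move=> maximal; rewrite chi_ord hatchi_ord.
have -> // : (x \in maxel alpha J) = (x \in J).
rewrite inE; apply: andb_idr => _; apply/forallP => y; apply/implyP => _.
apply/negP => /andP[nxy xy]; case: (connect_first xy) => [exy|[z xz _]].
  by rewrite exy eqxx in nxy.
by rewrite (negbTE (maximal z)) in xz.
Qed.

End LocalRules.

Section Palindromic.
Variable alpha : seq nat.
Hypotheses (fence : fence_params alpha) (pal : palindromic alpha).
Local Notation n := (fsize alpha).
Local Notation t := (size alpha).
Local Notation ps := (psum alpha).
Local Notation up := (up alpha).

Lemma psumS k : ps k.+1 = ps k + nth 0 alpha k.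
Proof. by rewrite /psum big_ord_recr. Qed.

Lemma psum_head i : 0 < i -> nth 0 alpha 0 <= ps i.
Proof. by case: i => // i _; rewrite /psum big_ord_recl leq_addr. Qed.

Lemma head_ge2 : 2 <= nth 0 alpha 0.
Proof. by case: fence. Qed.

Lemma size_gt0 : 0 < t.
Proof. by case: fence => ? _ _ _; lia. Qed.

Lemma psum_size : ps t = n.+1.
Proof.
have pos : 0 < ps t by apply: leq_trans (psum_head size_gt0); apply: leq_trans head_ge2.
by rewrite /fsize (big_nth 0) big_mkord prednK.
Qed.

Lemma psum_rev i : i <= t -> ps (t - i) + ps i = n.+1.
Proof.
rewrite -psum_size; elim: i => [|i IH] it; first by rewrite subn0 /psum big_ord0 addn0.
have e : t - i = (t - i.+1).+1 by lia.
(* [palindromic] is stated with the ring zero of [nat]; the ascription converts it. *)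
have sym : nth 0 alpha i = nth 0 alpha (t - 1 - i) := pal it.
move: (IH (ltnW it)); rewrite e !psumS sym.
have -> : t - 1 - i = t - i.+1 by lia.
lia.
Qed.

Lemma up_count j : j <= n -> up j = ~~ odd (\sum_(1 <= i < t) (ps i <= j)).
Proof.
move=> jn; rewrite /up -sum1_count big_mkcond /=.
have -> : iota 1 t = index_iota 1 t.+1 by rewrite /index_iota subn1.
rewrite big_nat_recr ?size_gt0 //=.
by rewrite psum_size ltnNge jn addn0.
Qed.

Lemma up0 : up 0.
Proof.
rewrite up_count // big_nat big1 // => i /andP[i1 _].
apply/eqP; rewrite eqb0 -ltnNge.
exact: leq_trans (leq_trans _ head_ge2) (psum_head i1).
Qed.

Lemma up_change_psum j : 0 < j <= n -> up j.-1 != up j -> exists2 i, 0 < i < t & ps i = j.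
Proof.
move=> hj; have [/hasP[i]|/hasPn none] := boolP (has (fun i => ps i == j) (index_iota 1 t)).
  by rewrite mem_index_iota => it /eqP; exists i.
rewrite !up_count; try lia.
have -> : \sum_(1 <= i < t) (ps i <= j.-1) = \sum_(1 <= i < t) (ps i <= j).
  apply: eq_big_nat => i it; have := none i; rewrite mem_index_iota => /(_ it) ne.
  by rewrite -ltnS prednK ?ltn_neqAle ?ne //; lia.
by rewrite eqxx.
Qed.

Hypothesis odd_t : odd (size alpha).

Lemma up_rev j : j <= n -> up (n - j) = up j.
Proof.
move=> jn; rewrite !up_count ?leq_subr //.
have -> : \sum_(1 <= i < t) (ps i <= n - j) = \sum_(1 <= i < t) (j < ps i).
  rewrite big_nat_rev; apply: eq_big_nat => i /andP[i1 it].
  have := psum_rev (ltnW it); rewrite add1n subSS => e.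
  by congr nat_of_bool; apply/idP/idP; lia.
have : \sum_(1 <= i < t) (ps i <= j) + \sum_(1 <= i < t) (j < ps i) = t.-1.
  rewrite -big_split /= (eq_big_nat _ _ (F2 := fun => 1)) => [|i _]; last by case: leqP.
  by rewrite sum_nat_const_nat muln1 subn1.
move/(congr1 odd); rewrite oddD.
have -> : odd t.-1 = false by case: (size alpha) odd_t => //= s /negbTE.
by case: odd; case: odd.
Qed.

Lemma up_fsize : up n.
Proof. by rewrite -[n]subn0 up_rev // up0. Qed.

End Palindromic.

Section DiscreteHarmonic.
Variables (R : realFieldType) (f : nat -> R) (c : R).
Local Open Scope ring_scope.

Lemma harmonic_segment_const p q : (p < q)%N -> f p = c -> f q = c ->
  (forall k, (p < k < q)%N -> f k.-1 + f k.+1 = f k *+ 2) ->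
  forall k, (p <= k <= q)%N -> f k = c.
Proof.
move=> pq fp fq harm; pose d := f p.+1 - f p.
have slope m : (p + m < q)%N -> f (p + m).+1 - f (p + m) = d.
  elim: m => [|m IH] hm; first by rewrite addn0.
  rewrite addnS; have := harm (p + m).+1 (ltac:(lia)); rewrite /= mulr2n.
  have := IH (ltac:(lia)); lra.
have affine m : (p + m <= q)%N -> f (p + m) = c + d *+ m.
  elim: m => [|m IH] hm; first by rewrite addn0 fp mulr0n addr0.
  rewrite addnS mulrS; have := slope m (ltac:(lia)); have := IH (ltac:(lia)); lra.
have d0 : d = 0.
  have := affine (q - p)%N (ltac:(lia)); rewrite subnKC ?(ltnW pq) // fq => /eqP.
  rewrite -subr_eq0 opprD addrA subrr add0r oppr_eq0 mulrn_eq0.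
  by case/orP => [/eqP|/eqP //]; lia.
move=> k hk; have := affine (k - p)%N (ltac:(lia)).
by rewrite subnKC ?d0 ?mul0rn ?addr0 //; lia.
Qed.

Lemma harmonic_off_const (B : pred nat) m : f 0 = c -> f m = c ->
  (forall j, (0 < j < m)%N -> B j -> f j = c) ->
  (forall j, (0 < j < m)%N -> ~~ B j -> f j.-1 + f j.+1 = f j *+ 2) ->
  forall j, (j <= m)%N -> f j = c.
Proof.
move=> f0 fm fB harm; elim=> [//|j IH] jm.
have [-> //|jm'] := eqVneq j.+1 m.
have [Bj|nBj] := boolP (B j.+1); first by apply: fB => //; lia.
have ex : exists q, [&& j.+1 <= q, q <= m & (q == m) || B q]%N.
  by exists m; rewrite jm eqxx leqnn.
case: (ex_minnP ex) => q /and3P[jq qm Bq] qmin.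
apply: (@harmonic_segment_const j q); rewrite ?leqnSn //.
- by apply: IH; lia.
- have [-> //|qm'] := eqVneq q m.
  move: Bq; rewrite (negbTE qm') /= => Bq.
  by apply: fB => //; move/eqP: qm'; lia.
- move=> k hk; apply: harm; first lia.
  apply/negP => Bk; have := qmin k; rewrite Bk orbT.
  have [ek|nek] := eqVneq k j.+1; first by rewrite -ek Bk in nBj.
  by move/eqP: nek => nek /(_ ltac:(lia)); lia.
Qed.

End DiscreteHarmonic.

Section OrbitSums.
Variable alpha : seq nat.
Variable I : {set 'I_(fsize alpha)}.
Hypothesis idealI : is_ideal alpha I.
Local Notation n := (fsize alpha).
Local Notation T := 'I_(fsize alpha).
Local Notation t := (size alpha).
Local Notation ps := (psum alpha).
Local Notation cov := (cov alpha).
Local Notation up := (up alpha).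
Local Notation M := (min_compl alpha).
Local Notation O := (rorbit alpha I).
Local Notation Ocard := (#|rorbit alpha I|%:R : rat).
Implicit Types (x y : T).
Local Open Scope ring_scope.

Definition hsum p : rat := \sum_(J in O) hatchi alpha p J.
(* Position 0 stands for an adjoined bottom element x_0 lying in every ideal;
   position n+1 needs no such care, as hatchi vanishes there. *)
Definition hsum0 p : rat := if p is 0 then Ocard else hsum p.
Definition csum p : rat := \sum_(J in O) chi alpha p J.
Definition msum x : rat := \sum_(J in O) (x \in M J)%:R.

Lemma hsum0_pos p : (0 < p)%N -> hsum0 p = hsum p.
Proof. by case: p. Qed.

Lemma hsum_above_top : hsum n.+1 = 0.
Proof. by apply: big1 => J _; apply: hatchi_above. Qed.

Lemma hsum_upper x w : (forall y, cov x y = (val y == w)) -> hsum x.+1 = msum x + hsum w.+1.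
Proof.
move=> upper; rewrite /hsum -(sum_rorbit_rowmotion (hatchi alpha x.+1) idealI).
rewrite -(sum_rorbit_rowmotion (hatchi alpha w.+1) idealI) -big_split.
by apply: eq_bigr => J _; apply: hatchi_rowmotion_upper.
Qed.

Lemma msum_lower x w : (forall y, cov y x = (y == w)) -> msum x = hsum w.+1 - hsum x.+1.
Proof.
move=> lower; rewrite /msum /hsum -sumrB; apply: eq_bigr => J IJ.
exact: min_compl_lower (rorbit_ideal idealI IJ) lower.
Qed.

Lemma msum_minimal x : (forall y, ~~ cov y x) -> msum x = Ocard - hsum x.+1.
Proof.
move=> minimal; rewrite /msum (eq_bigr (fun J => 1 - hatchi alpha x.+1 J)).
  by rewrite sumrB sumr_const.
by move=> J _; apply: min_compl_minimal.
Qed.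

Lemma csum_rowmotion x : csum x.+1 = msum x.
Proof.
rewrite /csum -(sum_rorbit_rowmotion (chi alpha x.+1) idealI).
by apply: eq_bigr => J _; apply: chi_rowmotion.
Qed.

Lemma csum_maximal x : (forall y, ~~ cov x y) -> csum x.+1 = hsum x.+1.
Proof. by move=> maximal; apply: eq_bigr => J _; apply: chi_maximal. Qed.

Lemma hsum_slope_up k : (0 < k <= n)%N -> up k.-1 -> up k ->
  hsum0 k.-1 + hsum0 k.+1 = hsum0 k *+ 2 /\ csum k = hsum0 k.-1 - hsum0 k.
Proof.
case/ord_of_position=> x -> /= ux ux1.
have upper y : cov x y = (val y == x.+1) by rewrite cov_upperE ux ux1 andbT andbF orbF.
have lower_sum : msum x = hsum0 x - hsum x.+1.
  have [x0|x_gt0] := posnP x.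
    by rewrite msum_minimal ?x0 // => y; rewrite cov_lowerE ux1 andbF orbF x0.
  have wn : (x.-1 < n)%N by have := ltn_ord x; lia.
  rewrite (@msum_lower x (Ordinal wn)) /= ?prednK ?hsum0_pos // => y.
  by rewrite cov_lowerE ux ux1 andbT andbF orbF -val_eqE /=; apply/eqP/eqP; lia.
rewrite csum_rowmotion lower_sum; split=> //.
by have := hsum_upper upper; rewrite lower_sum mulr2n /=; lra.
Qed.

Lemma csum_peak k : (0 < k <= n)%N -> up k.-1 -> ~~ up k -> csum k = hsum0 k.
Proof.
case/ord_of_position=> x -> /= ux dx1; apply: csum_maximal => y.
by rewrite cov_upperE ux (negbTE dx1) !andbF.
Qed.

Lemma csum_valley k : (0 < k <= n)%N -> ~~ up k.-1 -> up k -> csum k = Ocard - hsum0 k.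
Proof.
case/ord_of_position=> x -> /= dx ux1; rewrite csum_rowmotion msum_minimal // => y.
by rewrite cov_lowerE (negbTE dx) ux1 !andbF.
Qed.

Hypotheses (fence : fence_params alpha) (pal : palindromic alpha).
Hypothesis odd_t : odd (size alpha).

Lemma hsum_slope_down k : (0 < k <= n)%N -> ~~ up k.-1 -> ~~ up k ->
  hsum0 k.-1 + hsum0 k.+1 = hsum0 k *+ 2 /\ csum k = hsum0 k.+1 - hsum0 k.
Proof.
case/ord_of_position=> x -> /= dx dx1.
have x_gt0 : (0 < x)%N by case: posnP dx => // ->; rewrite (up0 fence).
have x1n : (x.+1 < n)%N.
  have : x.+1 != n by apply: contraNneq dx1 => ->; exact: (up_fsize fence pal odd_t).
  by have := ltn_ord x; lia.
have upper y : cov x y = (val y == x.-1).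
  by rewrite cov_upperE (negbTE dx1) dx andbF andbT /=; apply/eqP/eqP; lia.
have lower y : cov y x = (y == Ordinal x1n).
  by rewrite cov_lowerE (negbTE dx) dx1 andbF andbT /= -val_eqE.
have := hsum_upper upper; rewrite prednK // hsum0_pos //.
rewrite csum_rowmotion (msum_lower lower) /= => hS; split=> //.
by rewrite mulr2n; lra.
Qed.

Lemma hsum_affine k : (0 < k <= n)%N -> up k.-1 = up k ->
  hsum0 k.-1 + hsum0 k.+1 = hsum0 k *+ 2.
Proof.
move=> hk e; have [uk|dk] := boolP (up k).
  by case: (hsum_slope_up hk _ uk); rewrite ?e.
by case: (hsum_slope_down hk _ dk); rewrite ?e.
Qed.

Lemma hsum0_add_mirror :
  (forall i, (0 < i < t)%N -> hsum (ps i) + hsum (ps (t - i)) = Ocard) ->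
  forall j, (j <= n.+1)%N -> hsum0 j + hsum0 (n.+1 - j) = Ocard.
Proof.
move=> shared; apply: (harmonic_off_const (B := fun j => up j.-1 != up j)).
- by rewrite subn0 (hsum0_pos (ltn0Sn n)) hsum_above_top addr0.
- by rewrite subnn (hsum0_pos (ltn0Sn n)) hsum_above_top add0r.
- move=> j hj change.
  have [i it ij] := @up_change_psum alpha fence j (ltac:(lia)) change; subst j.
  have e : (n.+1 - ps i)%N = ps (t - i) by have := psum_rev fence pal (i := i) (ltac:(lia)); lia.
  have [p1 p2] : (0 < ps i)%N /\ (0 < ps (t - i))%N by lia.
  by rewrite e !hsum0_pos // shared.
- move=> j hj /negPn/eqP e.
  have l1 := hsum_affine (k := j) (ltac:(lia)) e.
  have e' : up (n.+1 - j).-1 = up (n.+1 - j).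
    have -> : (n.+1 - j).-1 = (n - j)%N by lia.
    have -> : (n.+1 - j = n - j.-1)%N by lia.
    by rewrite !(up_rev fence pal odd_t) ?e //; lia.
  have l2 := hsum_affine (k := (n.+1 - j)%N) (ltac:(lia)) e'.
  have -> : (n.+1 - j.-1 = (n.+1 - j).+1)%N by lia.
  have -> : (n.+1 - j.+1 = (n.+1 - j).-1)%N by lia.
  by move: l1 l2; rewrite !mulr2n; lra.
Qed.

Lemma csum_mirror : (forall j, (j <= n.+1)%N -> hsum0 j + hsum0 (n.+1 - j) = Ocard) ->
  forall k, (0 < k <= n)%N -> csum k = csum (n.+1 - k).
Proof.
move=> mirror k hk; have [k' ek'] : exists k', k' = (n.+1 - k)%N by eexists.
rewrite -ek'; have hk' : (0 < k' <= n)%N by lia.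
have below : hsum0 k'.-1 = Ocard - hsum0 k.+1.
  have := mirror k.+1 (ltac:(lia)); have -> : (n.+1 - k.+1 = k'.-1)%N by lia.
  lra.
have at_k : hsum0 k' = Ocard - hsum0 k by have := mirror k (ltac:(lia)); rewrite -ek'; lra.
have above : hsum0 k'.+1 = Ocard - hsum0 k.-1.
  have := mirror k.-1 (ltac:(lia)); have -> : (n.+1 - k.-1 = k'.+1)%N by lia.
  lra.
have u1 : up k'.-1 = up k.
  have -> : k'.-1 = (n - k)%N by lia.
  by rewrite (up_rev fence pal odd_t) //; lia.
have u2 : up k' = up k.-1.
  have -> : k' = (n - k.-1)%N by lia.
  by rewrite (up_rev fence pal odd_t) //; lia.
case: (boolP (up k.-1)) => a; case: (boolP (up k)) => b;
  move: (a) (b); rewrite -u1 -u2 => a' b'.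
- have [lin ->] := hsum_slope_up hk a b.
  have [_ ->] := hsum_slope_up hk' b' a'.
  by move: lin; rewrite below at_k mulr2n; lra.
- by rewrite (csum_peak hk a b) (csum_valley hk' b' a') at_k; lra.
- by rewrite (csum_valley hk a b) (csum_peak hk' b' a') at_k; lra.
- have [lin ->] := hsum_slope_down hk a b.
  have [_ ->] := hsum_slope_down hk' b' a'.
  by move: lin; rewrite above at_k mulr2n; lra.
Qed.

End OrbitSums.

Local Open Scope ring_scope.

Theorem theorem5p10 (alpha : seq nat) :
  fence_params alpha -> palindromic alpha -> odd (size alpha) ->
  (forall i : nat, (1 <= i <= (size alpha).-1)%N ->
     mesic alpha (fun I => hatchi alpha (psum alpha i) I
                     + hatchi alpha (psum alpha (size alpha - i)) I) 1) ->
  (forall k : nat, (1 <= k <= fsize alpha)%N ->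
     mesic alpha (fun I => hatchi alpha k I + hatchi alpha (fsize alpha - k + 1) I) 1) /\
  (forall k : nat, (1 <= k <= fsize alpha)%N ->
     mesic alpha (fun I => chi alpha k I - chi alpha (fsize alpha - k + 1) I) 0).
Proof.
move=> fence pal odd_t shared.
have hsum_sym I : is_ideal alpha I -> forall j, (j <= (fsize alpha).+1)%N ->
    hsum0 I j + hsum0 I ((fsize alpha).+1 - j) = #|rorbit alpha I|%:R.
  move=> iI; apply: hsum0_add_mirror => // i hi.
  have /mesicP/(_ I iI) := shared i (ltac:(lia)).
  by rewrite big_split mul1r.
split=> k hk; apply/mesicP => I iI;
  have -> : (fsize alpha - k + 1 = (fsize alpha).+1 - k)%N by lia.
- rewrite big_split mul1r -(hsum_sym I iI k) ?hsum0_pos //; lia.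
- rewrite sumrB mul0r; apply/eqP; rewrite subr_eq0; apply/eqP.
  exact: (csum_mirror iI fence pal odd_t (hsum_sym I iI)).
Qed.
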